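(* Under the standing setup below, for every initial condition $x(0)\in[0,1]^n$ the opinion dynamics converge as $k\to\infty$ to a point $x^*(g,h)\in\mathbb R^n$ that does not depend on $x(0)$. The matrix $E\triangleq I-W+(g-h)\gamma I$ is invertible, and $$x^*(g,h)=E^{-1}\big(I-D-2\beta I+(h-g)\gamma I\big)s+E^{-1}\big((h+g)\beta\mathbf 1+(g^2-h^2)\gamma\mathbf 1\big),$$ where $D=\mathrm{diag}\big(\sum_{j}w_{1j},\dots,\sum_j w_{nj}\big)$ and $\mathbf 1$ is the all-ones vector.
   Context: Standing setup. Fix $n\in\mathbb N$ and $W=[w_{ij}]\in\mathbb R^{n\times n}$ with $w_{ij}\ge 0$ and $w_{ii}=0$. Let $\|W\|_\infty=\max_i\sum_j|w_{ij}|$, $\|W\|_1=\max_j\sum_i|w_{ij}|$, and let $\lambda$ be the spectral radius of $W$; assume there is a vector $c\in\mathbb R^n$ with all entries positive and $W^\top c=\lambda c$. Fix bias parameters $\beta,\gamma\in\mathbb R$ with $\beta\ge\gamma\ge0$ and $1-\max\{\|W\|_\infty,\|W\|_1\}>\max\{2\beta,4\gamma\}$. Fix innate opinions $s=(s_1,\dots,s_n)^\top\in[0,1]^n$, let $\overline s=\max_i s_i$, $\underline s=\min_i s_i$, and fix source opinions $g,h$ with $0\le g\le\underline s\le\overline s\le h\le1$. For $x\in\mathbb R$ set $\overline w(x)=\beta-\gamma|x-h|$, $\underline w(x)=\beta-\gamma|x-g|$, and $\alpha_i(x)=1-\sum_j w_{ij}-\overline w(x)-\underline w(x)$. The opinion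 dynamics are, for $i=1,\dots,n$ and $k\ge0$, $$x_i(k+1)=\alpha_i(x_i(k))s_i+\sum_{j=1}^n w_{ij}x_j(k)+\overline w(x_i(k))\,h+\underline w(x_i(k))\,g.$$ *)

(* classical reals (limits needed). Vectors in R^n are
   functions nat -> R (only indices 0..n-1 matter), n x n matrices are
   functions nat -> nat -> R. *)
From Stdlib Require Import Reals Lra Lia.
Open Scope R_scope.

Fixpoint rsum (n : nat) (f : nat -> R) : R :=
  match n with O => 0 | S m => rsum m f + f m end.

(* max_{i < n} f i  (0 for n = 0; used only on nonnegative quantities) *)
Fixpoint rmaxn (n : nat) (f : nat -> R) : R :=
  match n with O => 0 | S m => Rmax (rmaxn m f) (f m) end.

Definition norm_inf (n : nat) (W : nat -> nat -> R) : R :=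
  rmaxn n (fun i => rsum n (fun j => Rabs (W i j))).
Definition norm_one (n : nat) (W : nat -> nat -> R) : R :=
  rmaxn n (fun j => rsum n (fun i => Rabs (W i j))).

(* a + i b is a (complex) eigenvalue of the real matrix W: there is a nonzero
   complex vector u + i v with W (u + i v) = (a + i b)(u + i v). *)
Definition is_complex_eigenvalue (n : nat) (W : nat -> nat -> R) (a b : R) : Prop :=
  exists u v : nat -> R,
    (exists i, (i < n)%nat /\ (u i <> 0 \/ v i <> 0)) /\
    forall i, (i < n)%nat ->
      rsum n (fun j => W i j * u j) = a * u i - b * v i /\
      rsum n (fun j => W i j * v j) = b * u i + a * v i.

Definition is_spectral_radius (n : nat) (W : nat -> nat -> R) (lam : R) : Prop :=
  (exists a b, is_complex_eigenvalue n W a b /\ lam = sqrt (a * a + b * b)) /\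
  (forall a b, is_complex_eigenvalue n W a b -> sqrt (a * a + b * b) <= lam).

Definition wbar (beta gamma h x : R) : R := beta - gamma * Rabs (x - h).
Definition wund (beta gamma g x : R) : R := beta - gamma * Rabs (x - g).
Definition alpha (n : nat) (W : nat -> nat -> R) (beta gamma g h : R) (i : nat) (x : R) : R :=
  1 - rsum n (fun j => W i j) - wbar beta gamma h x - wund beta gamma g x.

Definition step (n : nat) (W : nat -> nat -> R) (beta gamma g h : R)
  (s : nat -> R) (x : nat -> R) : nat -> R :=
  fun i => alpha n W beta gamma g h i (x i) * s i + rsum n (fun j => W i j * x j)
           + wbar beta gamma h (x i) * h + wund beta gamma g (x i) * g.

Fixpoint traj (n : nat) (W : nat -> nat -> R) (beta gamma g h : R)
  (s x0 : nat -> R) (k : nat) : nat -> R :=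
  match k with
  | O => x0
  | S k' => step n W beta gamma g h s (traj n W beta gamma g h s x0 k')
  end.

Definition idm (i j : nat) : R := if Nat.eqb i j then 1 else 0.
Definition matmul (n : nat) (A B : nat -> nat -> R) : nat -> nat -> R :=
  fun i j => rsum n (fun k => A i k * B k j).

Definition is_inverse (n : nat) (E Einv : nat -> nat -> R) : Prop :=
  (forall i j, (i < n)%nat -> (j < n)%nat -> matmul n E Einv i j = idm i j) /\
  (forall i j, (i < n)%nat -> (j < n)%nat -> matmul n Einv E i j = idm i j).

Definition Emat (W : nat -> nat -> R) (gamma g h : R) : nat -> nat -> R :=
  fun i j => idm i j - W i j + (g - h) * gamma * idm i j.

Definition xstar (n : nat) (W : nat -> nat -> R) (beta gamma g h : R)
  (s : nat -> R) (Einv : nat -> nat -> R) : nat -> R :=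
  fun i =>
    rsum n (fun j => Einv i j *
      ((1 - rsum n (fun l => W j l) - 2 * beta + (h - g) * gamma) * s j))
    + rsum n (fun j => Einv i j *
      ((h + g) * beta + (g * g - h * h) * gamma)).

From Stdlib Require Import Reals Lra Lia.
From mathcomp Require all_boot all_algebra Rstruct.
(* Loading ssreflect switches bullets off globally; this file uses them. *)
Set Bullet Behavior "Strict Subproofs".
Open Scope R_scope.

(* Measure vectors in the sup norm over the indices 0..n-1 and put
   q := ||W||_inf + gamma (h - g); since gamma (h - g) <= gamma <= beta and
   2 beta < 1 - ||W||_inf, we have 0 <= q < 1.
   - The update map [step] is a q-contraction on all of R^n: the terms
     |x_i - h|, |x_i - g| are 1-Lipschitz and enter with the weights
     gamma (h - s_i) >= 0 and gamma (s_i - g) >= 0.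
   - On the box [g,h]^n the absolute values open up and [step] coincides with
     the affine map L(x) = b + W x + gamma (h - g) x (b collects the constant
     terms); L is again a q-contraction and maps the box into itself.
   - Since E = I - W - gamma (h - g) I, E u = 0 says that u is a fixed point of
     the contraction x |-> W x + gamma (h - g) x, so u = 0; injectivity gives an
     inverse (via MathComp's matrix library).
   - x* = E^{-1} b solves x* = L x*.  A contraction preserving a box has its
     fixed points in the box, so x* is in [g,h]^n, hence a fixed point of
     [step]; every trajectory then converges to it geometrically. *)

Lemma rsum_ext n f g : (forall j, (j < n)%nat -> f j = g j) -> rsum n f = rsum n g.
Proof.
  induction n as [|n IH]; intros H; simpl; auto.
  rewrite IH by (intros; apply H; lia). rewrite H by lia. reflexivity.
Qed.

Lemma rsum_plus n f g : rsum n (fun j => f j + g j) = rsum n f + rsum n g.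
Proof. induction n as [|n IH]; simpl; [lra | rewrite IH; lra]. Qed.

Lemma rsum_scal n a f : rsum n (fun j => a * f j) = a * rsum n f.
Proof. induction n as [|n IH]; simpl; [lra | rewrite IH; lra]. Qed.

Lemma rsum_minus n (a x y : nat -> R) :
  rsum n (fun j => a j * x j) - rsum n (fun j => a j * y j)
  = rsum n (fun j => a j * (x j - y j)).
Proof.
  rewrite (rsum_ext n (fun j => a j * (x j - y j))
             (fun j => a j * x j + (-1) * (a j * y j))) by (intros; ring).
  rewrite rsum_plus, rsum_scal. ring.
Qed.

Lemma rsum_le n f g : (forall j, (j < n)%nat -> f j <= g j) -> rsum n f <= rsum n g.
Proof.
  induction n as [|n IH]; intros H; simpl; [lra|].
  assert (rsum n f <= rsum n g) by (apply IH; intros; apply H; lia).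
  assert (f n <= g n) by (apply H; lia). lra.
Qed.

Lemma rsum_abs n f : Rabs (rsum n f) <= rsum n (fun j => Rabs (f j)).
Proof.
  induction n as [|n IH]; simpl; [rewrite Rabs_R0; lra|].
  eapply Rle_trans; [apply Rabs_triang | lra].
Qed.

Lemma rsum_swap n m (F : nat -> nat -> R) :
  rsum n (fun k => rsum m (F k)) = rsum m (fun j => rsum n (fun k => F k j)).
Proof.
  induction n as [|n IH]; simpl.
  - induction m; simpl; lra.
  - rewrite IH, <- rsum_plus. reflexivity.
Qed.

Lemma rsum_idm n i v : (i < n)%nat -> rsum n (fun j => idm i j * v j) = v i.
Proof.
  induction n as [|n IH]; intros Hi; simpl; [lia|].
  unfold idm at 2. destruct (Nat.eqb_spec i n) as [->|Hne].
  - rewrite (rsum_ext n _ (fun j => 0 * v j)).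
    + rewrite rsum_scal. ring.
    + intros j Hj. unfold idm. destruct (Nat.eqb_spec n j); [lia | reflexivity].
  - rewrite IH by lia. ring.
Qed.

Lemma rmaxn_ge n f i : (i < n)%nat -> f i <= rmaxn n f.
Proof.
  induction n as [|n IH]; intros Hi; simpl; [lia|].
  destruct (Nat.eq_dec i n) as [->|Hne]; [apply Rmax_r|].
  eapply Rle_trans; [apply IH; lia | apply Rmax_l].
Qed.

Lemma rmaxn_nonneg n f : 0 <= rmaxn n f.
Proof.
  induction n as [|n IH]; simpl; [lra|].
  eapply Rle_trans; [apply IH | apply Rmax_l].
Qed.

Lemma rmaxn_lub n f B :
  (forall i, (i < n)%nat -> f i <= B) -> 0 <= B -> rmaxn n f <= B.
Proof.
  induction n as [|n IH]; intros H HB; simpl; [lra|].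
  apply Rmax_lub; [apply IH; auto; intros; apply H; lia | apply H; lia].
Qed.

Definition supdist (n : nat) (x y : nat -> R) : R :=
  rmaxn n (fun j => Rabs (x j - y j)).

Lemma supdist_ge n x y j : (j < n)%nat -> Rabs (x j - y j) <= supdist n x y.
Proof. intros Hj. exact (rmaxn_ge n (fun j => Rabs (x j - y j)) j Hj). Qed.

Lemma supdist_nonneg n x y : 0 <= supdist n x y.
Proof. apply rmaxn_nonneg. Qed.

Lemma geometric_small q C eps : 0 <= q < 1 -> 0 <= C -> 0 < eps ->
  exists N, forall k, (k >= N)%nat -> q ^ k * C < eps.
Proof.
  intros Hq HC He.
  destruct (pow_lt_1_zero q ltac:(rewrite Rabs_right; lra) (eps / (C + 1)))
    as [N HN]; [apply Rdiv_lt_0_compat; lra|].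
  exists N. intros k Hk. specialize (HN k Hk).
  rewrite Rabs_right in HN by (apply Rle_ge, pow_le; lra).
  assert (HqC : q ^ k * (C + 1) < eps).
  { apply Rmult_lt_reg_r with (/ (C + 1)); [apply Rinv_0_lt_compat; lra|].
    rewrite Rmult_assoc, Rinv_r by lra. unfold Rdiv in HN. lra. }
  assert (0 <= q ^ k) by (apply pow_le; lra). nra.
Qed.

Lemma geometric_cv (u : nat -> R) l q C : 0 <= q < 1 -> 0 <= C ->
  (forall k, Rabs (u k - l) <= q ^ k * C) -> Un_cv u l.
Proof.
  intros Hq HC H eps He.
  destruct (geometric_small q C eps Hq HC He) as [N HN].
  exists N. intros k Hk. unfold R_dist.
  eapply Rle_lt_trans; [apply H | apply HN; lia].
Qed.

Lemma geometric_nonpos a q C : 0 <= q < 1 -> 0 <= C ->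
  (forall k, a <= q ^ k * C) -> a <= 0.
Proof.
  intros Hq HC H. destruct (Rle_dec a 0) as [|Ha]; auto.
  destruct (geometric_small q C a Hq HC ltac:(lra)) as [N HN].
  specialize (HN N (le_n _)). specialize (H N). lra.
Qed.

Section SupNormContraction.

Variable n : nat.
Variable T : (nat -> R) -> (nat -> R).
Variable q : R.
Hypothesis q_range : 0 <= q < 1.
Hypothesis T_contraction : forall x y M,
  (forall j, (j < n)%nat -> Rabs (x j - y j) <= M) ->
  forall i, (i < n)%nat -> Rabs (T x i - T y i) <= q * M.

Definition is_fixed (x : nat -> R) : Prop := forall j, (j < n)%nat -> T x j = x j.

Lemma fixed_point_unique x y :
  is_fixed x -> is_fixed y -> forall i, (i < n)%nat -> x i = y i.
Proof.
  intros Hx Hy i Hi.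
  pose proof (supdist_nonneg n x y) as HM0.
  assert (HMq : supdist n x y <= q * supdist n x y).
  { apply rmaxn_lub; [|nra]. intros j Hj.
    rewrite <- (Hx j Hj), <- (Hy j Hj).
    apply T_contraction; auto. intros k Hk. apply supdist_ge; auto. }
  assert (Hxy : Rabs (x i - y i) <= 0)
    by (pose proof (supdist_ge n x y i Hi); nra).
  destruct (Req_dec (x i - y i) 0) as [E|E]; [lra|].
  pose proof (Rabs_pos_lt _ E). lra.
Qed.

Lemma iterate_approach x xs : is_fixed xs ->
  forall k j, (j < n)%nat ->
  Rabs (Nat.iter k T x j - xs j) <= q ^ k * supdist n x xs.
Proof.
  intros Hxs k. induction k as [|k IH]; intros j Hj; simpl.
  - rewrite Rmult_1_l. apply supdist_ge; auto.
  - rewrite <- (Hxs j Hj), Rmult_assoc. apply T_contraction; auto.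
Qed.

Lemma iterate_cv x xs : is_fixed xs ->
  forall i, (i < n)%nat -> Un_cv (fun k => Nat.iter k T x i) (xs i).
Proof.
  intros Hxs i Hi.
  apply (geometric_cv _ _ q (supdist n x xs)); auto using supdist_nonneg.
  intros k. apply iterate_approach; auto.
Qed.

Lemma fixed_point_in_box lo hi xs : lo <= hi ->
  (forall x, (forall j, (j < n)%nat -> lo <= x j <= hi) ->
             forall i, (i < n)%nat -> lo <= T x i <= hi) ->
  is_fixed xs -> forall i, (i < n)%nat -> lo <= xs i <= hi.
Proof.
  intros Hlh Hbox Hxs i Hi.
  assert (Hy : forall k j, (j < n)%nat -> lo <= Nat.iter k T (fun _ => lo) j <= hi).
  { intros k. induction k as [|k IH]; intros j Hj; simpl; [lra|].
    apply Hbox; auto. }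
  pose proof (supdist_nonneg n (fun _ => lo) xs) as HC.
  pose proof (fun k => iterate_approach (fun _ => lo) xs Hxs k i Hi) as Happ.
  split.
  - assert (lo - xs i <= 0); [|lra].
    apply (geometric_nonpos _ q (supdist n (fun _ => lo) xs)); auto. intros k.
    pose proof (Hy k i Hi). pose proof (Happ k).
    pose proof (Rle_abs (Nat.iter k T (fun _ => lo) i - xs i)). lra.
  - assert (xs i - hi <= 0); [|lra].
    apply (geometric_nonpos _ q (supdist n (fun _ => lo) xs)); auto. intros k.
    pose proof (Hy k i Hi). pose proof (Happ k).
    pose proof (Rle_abs (- (Nat.iter k T (fun _ => lo) i - xs i))) as Hneg.
    rewrite Rabs_Ropp in Hneg. lra.
Qed.

End SupNormContraction.

(* An n x n real matrix with trivial kernel has a two-sided inverse; this is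
   transported from MathComp's matrices (row_free <-> unitmx). *)

Module MatrixInverse.
Import all_boot all_algebra Rstruct GRing.Theory.

Lemma rsum_big n (f : nat -> R) : rsum n f = (\sum_(k < n) f k)%R.
Proof.
elim: n => [|n IH]; first by rewrite big_ord0.
by rewrite big_ord_recr /= IH.
Qed.

Lemma inverse_of_trivial_kernel n (E : nat -> nat -> R) :
  (forall u : nat -> R,
     (forall i, (i < n)%coq_nat -> rsum n (fun k => E i k * u k) = 0) ->
     forall i, (i < n)%coq_nat -> u i = 0) ->
  exists Einv, is_inverse n E Einv.
Proof.
move=> Hker.
(* M is the transpose of E, acting on row vectors. *)
pose M := ((\matrix_(i < n, j < n) E j i)%R : 'M[R]_n).
pose ix k := @insub nat (fun k => (k < n)%N) 'I_n k.
have Hix (i : 'I_n) : ix i = Some i.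
  by rewrite /ix insubT //= => Hi; congr Some; apply: val_inj.
have HM (v : 'rV[R]_n) : (v *m M = 0)%R -> v = 0%R.
  move=> Hv.
  pose u k := if ix k is Some i then v ord0 i else 0.
  have Hu (i : 'I_n) : u i = v ord0 i by rewrite /u Hix.
  apply/matrixP => i0 j; rewrite ord1 mxE -Hu; apply: Hker; last exact/ltP.
  move=> i /ltP Hi.
  have := congr1 (fun A : 'M[R]_(1, n) => A ord0 (Ordinal Hi)) Hv.
  rewrite !mxE rsum_big => H; rewrite -[RHS]H.
  by apply: eq_bigr => k _; rewrite !mxE Hu mulrC.
have HU : M \in unitmx.
  rewrite -row_free_unit -kermx_eq0; apply/eqP/row_matrixP => i.
  by rewrite row0; apply: HM; rewrite -row_mul mulmx_ker row0.
pose N := invmx M.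
exists (fun i j => if (ix i, ix j) is (Some a, Some b) then N b a else 0).
have Hidm (a b : 'I_n) : idm a b = (1%:M : 'M[R]_n)%R b a.
  rewrite mxE /idm eq_sym; case: (PeanoNat.Nat.eqb_spec a b) => [/val_inj ->|Hab].
    by rewrite eqxx.
  by case: eqP => // Hba; case: Hab; rewrite Hba.
split=> i j /ltP Hi /ltP Hj.
- rewrite -[i]/(nat_of_ord (Ordinal Hi)) -[j]/(nat_of_ord (Ordinal Hj)).
  rewrite Hidm -(mulVmx HU) mxE /matmul rsum_big; apply: eq_bigr => k _.
  by rewrite !Hix !mxE mulrC.
- rewrite -[i]/(nat_of_ord (Ordinal Hi)) -[j]/(nat_of_ord (Ordinal Hj)).
  rewrite Hidm -(mulmxV HU) mxE /matmul rsum_big; apply: eq_bigr => k _.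
  by rewrite !Hix !mxE mulrC.
Qed.

End MatrixInverse.

Lemma apply_right_inverse n E Einv (b : nat -> R) i :
  (forall i j, (i < n)%nat -> (j < n)%nat -> matmul n E Einv i j = idm i j) ->
  (i < n)%nat ->
  rsum n (fun k => E i k * rsum n (fun j => Einv k j * b j)) = b i.
Proof.
  intros HEEinv Hi.
  rewrite (rsum_ext n _ (fun k => rsum n (fun j => E i k * Einv k j * b j))).
  2:{ intros k Hk. rewrite <- rsum_scal. apply rsum_ext. intros; ring. }
  rewrite rsum_swap, <- (rsum_idm n i b Hi).
  apply rsum_ext. intros j Hj. rewrite <- HEEinv by auto. unfold matmul.
  rewrite (rsum_ext n (fun k => E i k * Einv k j * b j)
             (fun k => b j * (E i k * Einv k j))) by (intros; ring).
  rewrite rsum_scal. ring.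
Qed.

Section OpinionModel.

Variables (n : nat) (W : nat -> nat -> R) (beta gamma g h : R) (s : nat -> R).
Hypothesis W_nonneg : forall i j, (i < n)%nat -> (j < n)%nat -> 0 <= W i j.
Hypothesis gamma_nonneg : 0 <= gamma.
Hypothesis gamma_le_beta : gamma <= beta.
Hypothesis g_le_h : g <= h.
Hypothesis g_nonneg : 0 <= g.
Hypothesis h_le_1 : h <= 1.
Hypothesis s_between : forall i, (i < n)%nat -> g <= s i <= h.
Hypothesis norm_small : 2 * beta < 1 - norm_inf n W.

Definition rate : R := norm_inf n W + gamma * (h - g).

Lemma rate_range : 0 <= rate < 1.
Proof.
  pose proof (rmaxn_nonneg n (fun i => rsum n (fun j => Rabs (W i j)))).
  fold (norm_inf n W) in *. unfold rate. split; nra.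
Qed.

Lemma row_sum_le_norm i : (i < n)%nat -> rsum n (fun j => W i j) <= norm_inf n W.
Proof.
  intros Hi. unfold norm_inf.
  rewrite (rsum_ext n (fun j => W i j) (fun j => Rabs (W i j))).
  - exact (rmaxn_ge n (fun i => rsum n (fun j => Rabs (W i j))) i Hi).
  - intros j Hj. symmetry. apply Rabs_right, Rle_ge; auto.
Qed.

Lemma weighted_sum_bound i e M : (i < n)%nat ->
  (forall j, (j < n)%nat -> Rabs (e j) <= M) ->
  Rabs (rsum n (fun j => W i j * e j)) <= norm_inf n W * M.
Proof.
  intros Hi He.
  assert (HM : 0 <= M) by (eapply Rle_trans; [apply Rabs_pos | apply (He i Hi)]).
  eapply Rle_trans; [apply rsum_abs|].
  eapply Rle_trans; [apply (rsum_le n _ (fun j => M * W i j))|].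
  - intros j Hj. rewrite Rabs_mult, Rabs_right by (apply Rle_ge; auto).
    rewrite Rmult_comm. apply Rmult_le_compat_r; auto.
  - rewrite rsum_scal, Rmult_comm.
    apply Rmult_le_compat_r; auto using row_sum_le_norm.
Qed.

Lemma step_contraction x y M :
  (forall j, (j < n)%nat -> Rabs (x j - y j) <= M) ->
  forall i, (i < n)%nat ->
  Rabs (step n W beta gamma g h s x i - step n W beta gamma g h s y i) <= rate * M.
Proof.
  intros HM i Hi.
  assert (Hdiff : step n W beta gamma g h s x i - step n W beta gamma g h s y i =
    rsum n (fun j => W i j * (x j - y j)) +
    (gamma * (s i - h) * (Rabs (x i - h) - Rabs (y i - h))
     + gamma * (s i - g) * (Rabs (x i - g) - Rabs (y i - g)))).
  { rewrite <- rsum_minus. unfold step, alpha, wbar, wund. ring. }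
  rewrite Hdiff. eapply Rle_trans; [apply Rabs_triang|].
  pose proof (weighted_sum_bound i (fun j => x j - y j) M Hi HM).
  pose proof (HM i Hi). pose proof (s_between i Hi).
  assert (Hlip : forall c, -M <= Rabs (x i - c) - Rabs (y i - c) <= M).
  { intros c.
    pose proof (Rabs_triang_inv (x i - c) (y i - c)) as Hxy.
    pose proof (Rabs_triang_inv (y i - c) (x i - c)) as Hyx.
    replace (x i - c - (y i - c)) with (x i - y i) in Hxy by ring.
    replace (y i - c - (x i - c)) with (- (x i - y i)) in Hyx by ring.
    rewrite Rabs_Ropp in Hyx. pose proof (HM i Hi). lra. }
  destruct (Hlip h), (Hlip g).
  set (a := Rabs (x i - h) - Rabs (y i - h)) in *.
  set (b := Rabs (x i - g) - Rabs (y i - g)) in *.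
  assert (0 <= gamma * (h - s i)) by nra.
  assert (0 <= gamma * (s i - g)) by nra.
  assert (Rabs (gamma * (s i - h) * a + gamma * (s i - g) * b)
          <= gamma * (h - g) * M) by (apply Rabs_le; split; nra).
  unfold rate. lra.
Qed.

(* Constant part of the dynamics on the box [g,h]^n. *)
Definition drive (i : nat) : R :=
  (1 - rsum n (fun l => W i l) - 2 * beta + (h - g) * gamma) * s i
  + ((h + g) * beta + (g * g - h * h) * gamma).

Definition affine_step (b x : nat -> R) (i : nat) : R :=
  b i + rsum n (fun j => W i j * x j) + gamma * (h - g) * x i.

Lemma affine_contraction b x y M :
  (forall j, (j < n)%nat -> Rabs (x j - y j) <= M) ->
  forall i, (i < n)%nat -> Rabs (affine_step b x i - affine_step b y i) <= rate * M.
Proof.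
  intros HM i Hi.
  assert (Hdiff : affine_step b x i - affine_step b y i =
    rsum n (fun j => W i j * (x j - y j)) + gamma * (h - g) * (x i - y i)).
  { rewrite <- rsum_minus. unfold affine_step. ring. }
  rewrite Hdiff. eapply Rle_trans; [apply Rabs_triang|].
  pose proof (weighted_sum_bound i (fun j => x j - y j) M Hi HM).
  pose proof (HM i Hi).
  assert (0 <= gamma * (h - g)) by nra.
  rewrite Rabs_mult, (Rabs_right (gamma * (h - g))) by lra.
  unfold rate. nra.
Qed.

Lemma step_affine_on_box x i : g <= x i <= h ->
  step n W beta gamma g h s x i = affine_step drive x i.
Proof.
  intros Hx. unfold step, affine_step, drive, alpha, wbar, wund.
  rewrite (Rabs_left1 (x i - h)), (Rabs_right (x i - g)) by lra. ring.
Qed.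

(* The affine map keeps the box [g,h]^n invariant: after subtracting g (resp.
   from h) it is a sum of three nonnegative terms. *)
Lemma affine_step_preserves_box x :
  (forall j, (j < n)%nat -> g <= x j <= h) ->
  forall i, (i < n)%nat -> g <= affine_step drive x i <= h.
Proof.
  intros Hx i Hi.
  pose proof (row_sum_le_norm i Hi) as Hd.
  set (d := rsum n (fun j => W i j)) in *.
  set (S := rsum n (fun j => W i j * x j)).
  assert (HS : g * d <= S <= h * d).
  { unfold S, d. rewrite <- !rsum_scal. split; apply rsum_le; intros j Hj;
      rewrite (Rmult_comm _ (W i j)); apply Rmult_le_compat_l; auto; apply Hx; auto. }
  pose proof (Hx i Hi). pose proof (s_between i Hi).
  set (a := 1 - d - 2 * beta + (h - g) * gamma).
  assert (0 <= a) by (unfold a; nra).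
  assert (0 <= beta - gamma * (h - x i)) by nra.
  assert (0 <= beta - gamma * (x i - g)) by nra.
  assert (Hlow : affine_step drive x i - g
    = a * (s i - g) + (S - g * d) + (beta - gamma * (h - x i)) * (h - g))
    by (unfold affine_step, drive, a; fold d S; ring).
  assert (Hhigh : h - affine_step drive x i
    = a * (h - s i) + (h * d - S) + (beta - gamma * (x i - g)) * (h - g))
    by (unfold affine_step, drive, a; fold d S; ring).
  split; nra.
Qed.

Lemma Emat_apply u i : (i < n)%nat ->
  rsum n (fun k => Emat W gamma g h i k * u k)
  = u i - rsum n (fun k => W i k * u k) + (g - h) * gamma * u i.
Proof.
  intros Hi. unfold Emat.
  rewrite (rsum_ext n _ (fun k => idm i k * u k + ((-1) * (W i k * u k)
             + ((g - h) * gamma) * (idm i k * u k)))) by (intros; ring).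
  rewrite !rsum_plus, !rsum_scal, rsum_idm by auto. ring.
Qed.

(* E u = 0 makes u a fixed point of the homogeneous affine contraction,
   whose only fixed point is 0. *)
Lemma Emat_kernel_trivial u :
  (forall i, (i < n)%nat -> rsum n (fun k => Emat W gamma g h i k * u k) = 0) ->
  forall i, (i < n)%nat -> u i = 0.
Proof.
  intros Hu.
  apply (fixed_point_unique n (affine_step (fun _ => 0)) rate rate_range
           (affine_contraction (fun _ => 0))).
  - intros j Hj. pose proof (Hu j Hj) as Huj. rewrite Emat_apply in Huj by auto.
    unfold affine_step. lra.
  - intros j Hj. unfold affine_step.
    rewrite (rsum_ext n _ (fun k => 0 * W j k)), rsum_scal by (intros; ring). ring.
Qed.

Lemma xstar_fixed Einv : is_inverse n (Emat W gamma g h) Einv ->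
  is_fixed n (affine_step drive) (xstar n W beta gamma g h s Einv).
Proof.
  intros [HEEinv _] i Hi.
  set (xs := xstar n W beta gamma g h s Einv).
  assert (Hxs : forall k, xs k = rsum n (fun j => Einv k j * drive j)).
  { intros k. unfold xs, xstar, drive. rewrite <- rsum_plus.
    apply rsum_ext. intros; ring. }
  pose proof (apply_right_inverse n _ Einv drive i HEEinv Hi) as HE.
  rewrite (rsum_ext n _ (fun k => Emat W gamma g h i k * xs k)) in HE
    by (intros; rewrite Hxs; reflexivity).
  rewrite Emat_apply in HE by auto.
  unfold affine_step. lra.
Qed.

End OpinionModel.

Lemma traj_iter n W beta gamma g h s x0 k :
  traj n W beta gamma g h s x0 k = Nat.iter k (step n W beta gamma g h s) x0.
Proof. induction k as [|k IH]; simpl; [reflexivity | rewrite IH; reflexivity]. Qed.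

Theorem theorem1 (n : nat) (W : nat -> nat -> R) (lam : R) (c : nat -> R)
  (beta gamma : R) (s : nat -> R) (g h : R)
  (HWnn : forall i j, (i < n)%nat -> (j < n)%nat -> 0 <= W i j)
  (HWdiag : forall i, (i < n)%nat -> W i i = 0)
  (Hlam : is_spectral_radius n W lam)
  (Hcpos : forall i, (i < n)%nat -> 0 < c i)
  (Hc : forall j, (j < n)%nat -> rsum n (fun i => W i j * c i) = lam * c j)
  (Hbg : beta >= gamma) (Hg0 : gamma >= 0)
  (Hnorm : 1 - Rmax (norm_inf n W) (norm_one n W) > Rmax (2 * beta) (4 * gamma))
  (Hs : forall i, (i < n)%nat -> 0 <= s i <= 1)
  (Hg : 0 <= g) (Hgs : forall i, (i < n)%nat -> g <= s i)
  (Hsh : forall i, (i < n)%nat -> s i <= h) (Hh : h <= 1) :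
  (exists Einv, is_inverse n (Emat W gamma g h) Einv) /\
  (forall Einv, is_inverse n (Emat W gamma g h) Einv ->
    forall x0 : nat -> R, (forall i, (i < n)%nat -> 0 <= x0 i <= 1) ->
      forall i, (i < n)%nat ->
        Un_cv (fun k => traj n W beta gamma g h s x0 k i)
              (xstar n W beta gamma g h s Einv i)).
Proof.
  assert (Hsmall : 2 * beta < 1 - norm_inf n W).
  { pose proof (Rmax_l (norm_inf n W) (norm_one n W)).
    pose proof (Rmax_l (2 * beta) (4 * gamma)). lra. }
  assert (Hgamma : 0 <= gamma) by lra.
  assert (Hgb : gamma <= beta) by lra.
  assert (Hsb : forall i, (i < n)%nat -> g <= s i <= h) by (intros; split; auto).
  (* as soon as there is an agent i, g <= s_i <= h *)
  assert (Hgh : forall i, (i < n)%nat -> g <= h)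
    by (intros i Hi; destruct (Hsb i Hi); lra).
  split.
  - apply MatrixInverse.inverse_of_trivial_kernel. intros u Hu i Hi.
    exact (Emat_kernel_trivial n W beta gamma g h HWnn Hgamma Hgb (Hgh i Hi) Hg Hh
             Hsmall u Hu i Hi).
  - intros Einv HE x0 _ i Hi.
    set (L := affine_step n W gamma g h (drive n W beta gamma g h s)).
    set (xs := xstar n W beta gamma g h s Einv).
    pose proof (rate_range n W beta gamma g h Hgamma Hgb (Hgh i Hi) Hg Hh Hsmall)
      as Hrate.
    (* x* is the fixed point of L, which preserves the box, so x* is in it *)
    assert (Hbox : forall j, (j < n)%nat -> g <= xs j <= h).
    { apply (fixed_point_in_box n L _ Hrate
               (affine_contraction n W gamma g h HWnn Hgamma (Hgh i Hi) _) g h xs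
               (Hgh i Hi)
               (affine_step_preserves_box n W beta gamma g h s HWnn Hgamma Hgb Hg Hh
                  Hsb Hsmall)
               (xstar_fixed n W beta gamma g h s Einv HE)). }
    (* on the box [step] agrees with L, so x* is also a fixed point of [step] *)
    assert (Hstep_fixed : is_fixed n (step n W beta gamma g h s) xs).
    { intros j Hj. rewrite step_affine_on_box by auto.
      apply (xstar_fixed n W beta gamma g h s Einv HE j Hj). }
    apply (Un_cv_ext (fun k => Nat.iter k (step n W beta gamma g h s) x0 i)).
    + intros k. rewrite traj_iter. reflexivity.
    + exact (iterate_cv n _ _ Hrate
               (step_contraction n W beta gamma g h s HWnn Hgamma Hsb) x0 xs
               Hstep_fixed i Hi).
Qed.
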